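(* Let $\kappa=(a,b,c,d)$ with $a,b,c,d\notin\{\pm2\}$, let $\rho\in\mathcal H_\kappa$, and let $(x,y,z)=(\operatorname{tr}\rho(AB),\operatorname{tr}\rho(BC),\operatorname{tr}\rho(CA))$. Then $\rho$ is a $\mathrm{Spin}(2)$-representation if and only if $x$ is an endpoint of both $I_{a,b}$ and $I_{c,d}$, $y$ is an endpoint of both $I_{b,c}$ and $I_{a,d}$, and $z$ is an endpoint of both $I_{a,c}$ and $I_{b,d}$.
   Context: $M$ is a four-holed sphere with $\pi_1(M)=\langle A,B,C,D : ABCD=I\rangle$, $A,B,C,D$ the boundary classes. For $\kappa=(a,b,c,d)\in[-2,2]^4$, $\mathcal H_\kappa$ is the set of homomorphisms $\rho:\pi_1(M)\to\mathrm{SU}(2)$ with $\operatorname{tr}\rho(A)=a$, $\operatorname{tr}\rho(B)=b$, $\operatorname{tr}\rho(C)=c$, $\operatorname{tr}\rho(D)=d$. For $s,t\in[-2,2]$, $I_{s,t}=\Big[\frac{st-\sqrt{(s^2-4)(t^2-4)}}{2},\ \frac{st+\sqrt{(s^2-4)(t^2-4)}}{2}\Big]$. $\mathrm{Spin}(2)\subset\mathrm{SU}(2)$ is the circle subgroup $\{e^{i\theta}\}$, where $e^{i\theta}$ denotes the matrix $\begin{pmatrix}\cos\theta&\sin\theta\\-\sin\theta&\cos\theta\end{pmatrix}$. For a subgroup $G\subset\mathrm{SU}(2)$, $\rho$ is called a $G$-representation if some $\mathrm{SU}(2)$-conjugate of $\rho$ has image contained in $G$. *)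

From HB Require Import structures.
From mathcomp Require Import all_boot all_order all_algebra.
From mathcomp Require Import complex.
From mathcomp Require Import reals trigo.
Set Implicit Arguments. Unset Strict Implicit. Unset Printing Implicit Defensive.
Import Order.TTheory GRing.Theory Num.Theory.
Local Open Scope ring_scope.
Local Open Scope complex_scope.

Section Defs.
Variable R : realType.

Definition adjmx (U : 'M[R[i]]_2) : 'M[R[i]]_2 := (map_mx (@conjc R) U)^T.

Definition SU2 (U : 'M[R[i]]_2) : Prop :=
  U *m adjmx U = 1%:M /\ \det U = 1.

Definition eitheta (t : R) : 'M[R[i]]_2 :=
  \matrix_(i < 2, j < 2)
    (if i == j then (cos t)%:C
     else if (i == 0) then (sin t)%:C else (- sin t)%:C).

Definition Spin2 (U : 'M[R[i]]_2) : Prop := exists t : R, U = eitheta t.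

(* A homomorphism rho : pi_1(M) = <A,B,C,D | ABCD = I> -> SU(2) is the same
   as the quadruple (rho A, rho B, rho C, rho D) of SU(2) matrices with
   product the identity. *)
Definition SU2_rep (rA rB rC rD : 'M[R[i]]_2) : Prop :=
  [/\ SU2 rA, SU2 rB, SU2 rC, SU2 rD & rA *m rB *m rC *m rD = 1%:M].

Definition in_H (a b c d : R) (rA rB rC rD : 'M[R[i]]_2) : Prop :=
  SU2_rep rA rB rC rD /\
  [/\ \tr rA = a%:C, \tr rB = b%:C, \tr rC = c%:C & \tr rD = d%:C].

(* rho is a G-representation: some SU(2)-conjugate of rho has image in G.
   The image of rho is the subgroup generated by rho A, rho B, rho C, rho D,
   and conjugation by g sends rho(X) to g rho(X) g^{-1}; since Spin(2) is a
   subgroup, the image lies in it iff the four generators do. *)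
Definition Spin2_rep (rA rB rC rD : 'M[R[i]]_2) : Prop :=
  exists g : 'M[R[i]]_2, SU2 g /\
    forall X, X \in [:: rA; rB; rC; rD] -> Spin2 (g *m X *m invmx g).

Definition Ilo (s t : R) : R := (s * t - Num.sqrt ((s ^+ 2 - 4) * (t ^+ 2 - 4))) / 2.
Definition Ihi (s t : R) : R := (s * t + Num.sqrt ((s ^+ 2 - 4) * (t ^+ 2 - 4))) / 2.

Definition is_endpoint (s t : R) (x : R[i]) : Prop :=
  x = (Ilo s t)%:C \/ x = (Ihi s t)%:C.

End Defs.

From HB Require Import structures.
From mathcomp Require Import all_boot all_order all_algebra.
From mathcomp Require Import complex.
From mathcomp Require Import reals trigo.
From mathcomp Require Import ring lra.
Import Order.TTheory GRing.Theory Num.Theory.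
Set Implicit Arguments. Unset Strict Implicit. Unset Printing Implicit Defensive.
Local Open Scope ring_scope.
Local Open Scope complex_scope.

(* Identify SU(2) with the unit quaternions m0 + m1 i + m2 j + m3 k and Spin(2) with the
   circle cos t + sin t j.  Then tr = 2 m0 and tr (P Q) = 2 (p0 q0 - <p, q>) for the
   vector parts p, q.
   If a conjugate of rho takes A, B, C, D to angles al, be, ga, de, then
   x = 2 cos (al + be), an endpoint of I_{2 cos al, 2 cos be}; and al + be + ga + de is a
   multiple of 2 pi, so x = 2 cos (ga + de) too.
   Conversely, x being an endpoint of I_{a,b} says <a, b>^2 = |a|^2 |b|^2, equality in
   Cauchy-Schwarz, so the vector part of rho B is parallel to that of rho A (which is
   nonzero as a <> +-2); likewise for rho C via z.  Hence rho A, rho B, rho C lie on one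
   circle through the axis of rho A, which is conjugate to Spin(2), and so does
   rho D = (rho A rho B rho C)^-1. *)

Lemma det_mx2 (R : comPzRingType) (M : 'M[R]_2) :
  \det M = M 0 0 * M 1 1 - M 0 1 * M 1 0.
Proof.
rewrite (expand_det_row _ 0) !big_ord_recl big_ord0 addr0 /cofactor !det_mx11 !mxE /=.
rewrite !expr0 !expr1 !mul1r mulN1r mulrN.
by congr (_ * M _ _ - M _ _ * M _ _); apply/val_inj.
Qed.

Lemma ord2P (k : 'I_2) : k = 0 \/ k = 1.
Proof. by case: k => [[|[|//]] ?]; [left|right]; apply/val_inj. Qed.

Lemma mulmx_conj (F : comUnitRingType) (n : nat) (g X Y : 'M[F]_n) :
  g \in unitmx -> (g *m X *m invmx g) *m (g *m Y *m invmx g) = g *m (X *m Y) *m invmx g.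
Proof. by move=> gU; rewrite !mulmxA mulmxKV. Qed.

Lemma mxtrace_conj (F : comUnitRingType) (n : nat) (g X : 'M[F]_n) :
  g \in unitmx -> \tr (g *m X *m invmx g) = \tr X.
Proof. by move=> gU; rewrite mxtrace_mulC mulKmx. Qed.

Lemma exists_cos_sin (R : realType) (u v : R) :
  u ^+ 2 + v ^+ 2 = 1 -> exists t, cos t = u /\ sin t = v.
Proof.
move=> uv1.
have u_itv : -1 <= u <= 1.
  have : u ^+ 2 <= 1 by rewrite -uv1 lerDl sqr_ge0.
  by move=> u2; apply/andP; split; nra.
have cos_acos : cos (acos u) = u by apply: acosK; rewrite in_itv /=.
have sin_acos : sin (acos u) = `|v|.
  by rewrite sin_acos // -sqrtr_sqr; congr Num.sqrt; rewrite -uv1; ring.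
have [v_ge0|v_lt0] := leP 0 v.
  by exists (acos u); rewrite cos_acos sin_acos ger0_norm.
by exists (- acos u); rewrite cosN sinN cos_acos sin_acos ltr0_norm // opprK.
Qed.

Lemma is_endpoint_cosD (R : realType) (s t : R) :
  is_endpoint (2 * cos s) (2 * cos t) (2 * cos (s + t))%:C.
Proof.
rewrite /is_endpoint /Ilo /Ihi.
have -> : ((2 * cos s) ^+ 2 - 4) * ((2 * cos t) ^+ 2 - 4) = (4 * sin s * sin t) ^+ 2.
  have -> : (4 * sin s * sin t) ^+ 2 = 16 * sin s ^+ 2 * sin t ^+ 2 by ring.
  rewrite !sin2cos2; ring.
rewrite sqrtr_sqr cosD.
have [ss_ge0|ss_lt0] := leP 0 (4 * sin s * sin t).
  by left; rewrite ger0_norm //; congr (_%:C); field.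
by right; rewrite ltr0_norm //; congr (_%:C); field.
Qed.

(* Here the endpoints of I_{2 a0, 2 b0} are 2 (a0 b0 -+ sqrt (na nb)). *)
Lemma is_endpoint_sqr (R : realType) (a0 b0 p na nb : R) :
  a0 ^+ 2 + na = 1 -> b0 ^+ 2 + nb = 1 -> 0 <= na -> 0 <= nb ->
  is_endpoint (2 * a0) (2 * b0) (2 * (a0 * b0 - p))%:C -> p ^+ 2 = na * nb.
Proof.
move=> a_unit b_unit na_ge0 nb_ge0; rewrite /is_endpoint /Ilo /Ihi.
have -> : ((2 * a0) ^+ 2 - 4) * ((2 * b0) ^+ 2 - 4) = 16 * na * nb.
  have ea : a0 ^+ 2 = 1 - na by rewrite -a_unit addrK.
  have eb : b0 ^+ 2 = 1 - nb by rewrite -b_unit addrK.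
  by rewrite !exprMn ea eb; ring.
set S := Num.sqrt _.
have S2 : S ^+ 2 = 16 * na * nb by rewrite sqr_sqrtr // !mulr_ge0.
case=> /complexI endp.
  have -> : p = S / 4 by lra.
  by rewrite expr_div_n S2; field.
have -> : p = - S / 4 by lra.
by rewrite expr_div_n sqrrN S2; field.
Qed.

Lemma cauchy_schwarz3_eq (R : realFieldType) (a1 a2 a3 b1 b2 b3 : R) :
  0 < a1 ^+ 2 + a2 ^+ 2 + a3 ^+ 2 ->
  (a1 * b1 + a2 * b2 + a3 * b3) ^+ 2 =
    (a1 ^+ 2 + a2 ^+ 2 + a3 ^+ 2) * (b1 ^+ 2 + b2 ^+ 2 + b3 ^+ 2) ->
  exists mu, [/\ b1 = mu * a1, b2 = mu * a2 & b3 = mu * a3].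
Proof.
move=> na_gt0 eq_cs.
have na_neq0 : a1 ^+ 2 + a2 ^+ 2 + a3 ^+ 2 != 0 by rewrite gt_eqF.
set mu := (a1 * b1 + a2 * b2 + a3 * b3) / (a1 ^+ 2 + a2 ^+ 2 + a3 ^+ 2).
have dist0 : (b1 - mu * a1) ^+ 2 + (b2 - mu * a2) ^+ 2 + (b3 - mu * a3) ^+ 2 = 0.
  have -> : (b1 - mu * a1) ^+ 2 + (b2 - mu * a2) ^+ 2 + (b3 - mu * a3) ^+ 2 =
      ((a1 ^+ 2 + a2 ^+ 2 + a3 ^+ 2) * (b1 ^+ 2 + b2 ^+ 2 + b3 ^+ 2)
       - (a1 * b1 + a2 * b2 + a3 * b3) ^+ 2) / (a1 ^+ 2 + a2 ^+ 2 + a3 ^+ 2).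
    by rewrite /mu; field.
  by rewrite eq_cs subrr mul0r.
have s1 := sqr_ge0 (b1 - mu * a1).
have s2 := sqr_ge0 (b2 - mu * a2).
have s3 := sqr_ge0 (b3 - mu * a3).
by exists mu; split; apply/eqP; rewrite -subr_eq0 -sqrf_eq0; apply/eqP; lra.
Qed.

Section QuaternionModel.
Variable R : realType.

Let complexD (a b c d : R) : (a +i* b) + (c +i* d) = (a + c) +i* (b + d).
Proof. by []. Qed.
Let complexM (a b c d : R) : (a +i* b) * (c +i* d) = (a * c - b * d) +i* (a * d + b * c).
Proof. by []. Qed.
Let complexN (a b : R) : - (a +i* b) = (- a) +i* (- b).
Proof. by []. Qed.
Let complexJ (a b : R) : (a +i* b)^*%C = a +i* (- b).
Proof. by []. Qed.

(* The matrix of the quaternion m0 + m1 i + m2 j + m3 k. *)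
Definition quat (m0 m1 m2 m3 : R) : 'M[R[i]]_2 :=
  \matrix_(i < 2, j < 2)
    if i == 0 then (if j == 0 then m0 +i* m1 else m2 +i* m3)
    else (if j == 0 then (- m2) +i* m3 else m0 +i* (- m1)).

Ltac quat_entries :=
  apply/matrixP => i j; have [->|->] := ord2P i; have [->|->] := ord2P j; rewrite !mxE /=.

Lemma quatM a0 a1 a2 a3 b0 b1 b2 b3 : quat a0 a1 a2 a3 *m quat b0 b1 b2 b3 =
  quat (a0 * b0 - a1 * b1 - a2 * b2 - a3 * b3) (a0 * b1 + a1 * b0 + a2 * b3 - a3 * b2)
       (a0 * b2 - a1 * b3 + a2 * b0 + a3 * b1) (a0 * b3 + a1 * b2 - a2 * b1 + a3 * b0).
Proof.
quat_entries; rewrite !big_ord_recl big_ord0 !mxE /= !complexM !complexD;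
  congr Complex; ring.
Qed.

Lemma quatZ k m0 m1 m2 m3 :
  quat (k * m0) (k * m1) (k * m2) (k * m3) = k%:C *: quat m0 m1 m2 m3.
Proof. by quat_entries; rewrite complexM; congr Complex; ring. Qed.

Lemma quat1 : quat 1 0 0 0 = 1%:M.
Proof. by quat_entries; congr Complex; rewrite ?oppr0. Qed.

Lemma quat_inj a0 a1 a2 a3 b0 b1 b2 b3 :
  quat a0 a1 a2 a3 = quat b0 b1 b2 b3 -> [/\ a0 = b0, a1 = b1, a2 = b2 & a3 = b3].
Proof.
move=> eq_ab; have := congr1 (fun M : 'M_2 => M 0 0) eq_ab.
have := congr1 (fun M : 'M_2 => M 0 1) eq_ab.
by rewrite !mxE /= => -[-> ->] [-> ->].
Qed.

Lemma mxtrace_quat m0 m1 m2 m3 : \tr (quat m0 m1 m2 m3) = (2 * m0)%:C.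
Proof.
by rewrite /mxtrace !big_ord_recl big_ord0 !mxE /= !complexD; congr Complex; ring.
Qed.

Lemma det_quat m0 m1 m2 m3 :
  \det (quat m0 m1 m2 m3) = (m0 ^+ 2 + m1 ^+ 2 + m2 ^+ 2 + m3 ^+ 2)%:C.
Proof. by rewrite det_mx2 !mxE /= !complexM; congr Complex; ring. Qed.

Lemma adjmx_quat m0 m1 m2 m3 : adjmx (quat m0 m1 m2 m3) = quat m0 (- m1) (- m2) (- m3).
Proof. by quat_entries; congr Complex; ring. Qed.

Lemma eitheta_quat (t : R) : eitheta t = quat (cos t) 0 (sin t) 0.
Proof. by quat_entries; congr Complex; ring. Qed.

Lemma quat_SU2 m0 m1 m2 m3 :
  m0 ^+ 2 + m1 ^+ 2 + m2 ^+ 2 + m3 ^+ 2 = 1 -> SU2 (quat m0 m1 m2 m3).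
Proof.
move=> m_unit; split; last by rewrite det_quat m_unit.
by rewrite adjmx_quat quatM -quat1; congr quat; rewrite -?m_unit; ring.
Qed.

Lemma SU2_quat (U : 'M[R[i]]_2) : SU2 U -> exists m0 m1 m2 m3,
  U = quat m0 m1 m2 m3 /\ m0 ^+ 2 + m1 ^+ 2 + m2 ^+ 2 + m3 ^+ 2 = 1.
Proof.
move=> [unitU detU].
have row00 := congr1 (fun M : 'M_2 => M 0 0) unitU.
have row10 := congr1 (fun M : 'M_2 => M 1 0) unitU.
rewrite !mxE !big_ord_recl big_ord0 !mxE /= in row00.
rewrite !mxE !big_ord_recl big_ord0 !mxE /= in row10.
rewrite det_mx2 in detU.
have lift01 : lift ord0 ord0 = 1 :> 'I_2 by apply/val_inj.
rewrite !lift01 in row00 row10.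
set p := U 0 0 in row00 row10 detU; set q := U 0 1 in row00 row10 detU.
set r := U 1 0 in row00 row10 detU; set s := U 1 1 in row00 row10 detU.
have eq_s : s = p^*%C.
  have -> : s = s * (1 - (p * p^*%C + (q * q^*%C + 0))) + p^*%C * ((p * s - q * r) - 1)
     + q * (r * p^*%C + (s * q^*%C + 0)) + p^*%C by ring.
  by rewrite row00 row10 detU; ring.
have eq_r : r = - q^*%C.
  have -> : r = r * (1 - (p * p^*%C + (q * q^*%C + 0))) - q^*%C * ((p * s - q * r) - 1)
     + p * (r * p^*%C + (s * q^*%C + 0)) - q^*%C by ring.
  by rewrite row00 row10 detU; ring.
move: row00 eq_r eq_s; rewrite /p /q /r /s.
case eU00 : (U 0 0) => [p0 p1]; case eU01 : (U 0 1) => [q0 q1] row00 eq_r eq_s.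
exists p0, p1, q0, q1; split.
  by quat_entries; rewrite ?eU00 ?eU01 ?eq_r ?eq_s // complexJ complexN opprK.
by move: row00; rewrite !complexJ !complexM !complexD => -[<- _]; ring.
Qed.

Lemma SU2_unitmx (g : 'M[R[i]]_2) : SU2 g -> g \in unitmx.
Proof. by case=> _ detg; rewrite unitmxE detg unitr1. Qed.

Lemma eithetaD (s t : R) : eitheta s *m eitheta t = eitheta (s + t).
Proof. by rewrite !eitheta_quat quatM cosD sinD; congr quat; ring. Qed.

Lemma eitheta0 : eitheta (0 : R) = 1%:M.
Proof. by rewrite eitheta_quat cos0 sin0 quat1. Qed.

Lemma mxtrace_eitheta (t : R) : \tr (eitheta t) = (2 * cos t)%:C.
Proof. by rewrite eitheta_quat mxtrace_quat. Qed.

Lemma Spin2_conj_axis_ge0 w1 w2 w3 :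
  0 < w1 ^+ 2 + w2 ^+ 2 + w3 ^+ 2 -> 0 <= w2 ->
  exists g, SU2 g /\ forall x0 mu, x0 ^+ 2 + mu ^+ 2 * (w1 ^+ 2 + w2 ^+ 2 + w3 ^+ 2) = 1 ->
    Spin2 (g *m quat x0 (mu * w1) (mu * w2) (mu * w3) *m invmx g).
Proof.
set nw := _ + _ + _ => nw_gt0 w2_ge0.
set r := Num.sqrt nw.
have r_gt0 : 0 < r by rewrite sqrtr_gt0.
have r2 : r ^+ 2 = nw by rewrite sqr_sqrtr // ltW.
set n := Num.sqrt (2 * r * (r + w2)).
have n_neq0 : n != 0 by rewrite gt_eqF // sqrtr_gt0; nra.
have n2 : n ^+ 2 = 2 * r * (r + w2) by rewrite sqr_sqrtr //; nra.
(* g, proportional to (r + w2) - w3 i + w1 k, is a rotation taking the axis w to r j. *)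
set g := quat (n^-1 * (r + w2)) (n^-1 * (- w3)) (n^-1 * 0) (n^-1 * w1).
have g_SU2 : SU2 g.
  apply: quat_SU2.
  have -> : (n^-1 * (r + w2)) ^+ 2 + (n^-1 * (- w3)) ^+ 2 + (n^-1 * 0) ^+ 2
      + (n^-1 * w1) ^+ 2 = ((r + w2) ^+ 2 + w3 ^+ 2 + w1 ^+ 2) / n ^+ 2 by field.
  have -> : (r + w2) ^+ 2 + w3 ^+ 2 + w1 ^+ 2 = n ^+ 2.
    rewrite n2; transitivity (r ^+ 2 + 2 * r * w2 + nw); first by rewrite /nw; ring.
    by rewrite -r2; ring.
  by rewrite divff // sqrf_eq0.
exists g; split => // x0 mu x0mu1.
have [t [cos_t sin_t]] : exists t, cos t = x0 /\ sin t = mu * r.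
  by apply: exists_cos_sin; rewrite exprMn r2.
exists t.
suff g_intertwines : g *m quat x0 (mu * w1) (mu * w2) (mu * w3) = eitheta t *m g.
  by rewrite g_intertwines -mulmxA mulmxV ?SU2_unitmx // mulmx1.
rewrite /g quatZ eitheta_quat cos_t sin_t -scalemxAl -scalemxAr; congr (_ *: _).
rewrite !quatM; congr quat; [ring | ring | | ring].
apply/eqP; rewrite -subr_eq0; apply/eqP.
by transitivity (mu * (nw - r ^+ 2)); [rewrite /nw; ring | rewrite r2 subrr mulr0].
Qed.

Lemma Spin2_conj_axis w1 w2 w3 : 0 < w1 ^+ 2 + w2 ^+ 2 + w3 ^+ 2 ->
  exists g, SU2 g /\ forall x0 mu, x0 ^+ 2 + mu ^+ 2 * (w1 ^+ 2 + w2 ^+ 2 + w3 ^+ 2) = 1 ->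
    Spin2 (g *m quat x0 (mu * w1) (mu * w2) (mu * w3) *m invmx g).
Proof.
move=> nw_gt0; have [w2_ge0|w2_lt0] := leP 0 w2; first exact: Spin2_conj_axis_ge0.
have [||g [g_SU2 g_Spin2]] := @Spin2_conj_axis_ge0 (- w1) (- w2) (- w3).
- by rewrite !sqrrN.
- by rewrite oppr_ge0 ltW.
exists g; split => // x0 mu x0mu1.
rewrite -(mulrNN mu w1) -(mulrNN mu w2) -(mulrNN mu w3).
by apply: g_Spin2; rewrite !sqrrN.
Qed.

Lemma Spin2_rep_conj (g rA rB rC rD : 'M[R[i]]_2) :
  SU2 g -> rA *m rB *m rC *m rD = 1%:M ->
  Spin2 (g *m rA *m invmx g) -> Spin2 (g *m rB *m invmx g) ->
  Spin2 (g *m rC *m invmx g) -> Spin2_rep rA rB rC rD.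
Proof.
move=> g_SU2 prod1 [ta eA] [tb eB] [tc eC].
have gU := SU2_unitmx g_SU2.
exists g; split => // X; rewrite !inE => /or4P[] /eqP ->;
  [by exists ta | by exists tb | by exists tc | exists (- (ta + tb + tc))].
have eABCD : eitheta (ta + tb + tc) *m (g *m rD *m invmx g) = 1%:M.
  by rewrite -!eithetaD -eA -eB -eC !mulmx_conj // prod1 mulmx1 mulmxV.
transitivity (eitheta (- (ta + tb + tc)) *m (eitheta (ta + tb + tc) *m (g *m rD *m invmx g))).
  by rewrite mulmxA eithetaD addNr eitheta0 mul1mx.
by rewrite eABCD mulmx1.
Qed.

Lemma endpoints_of_angles (ta tb tc td : R) : eitheta (ta + tb + tc + td) = 1%:M ->
  [/\ is_endpoint (2 * cos ta) (2 * cos tb) (2 * cos (ta + tb))%:C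
      /\ is_endpoint (2 * cos tc) (2 * cos td) (2 * cos (ta + tb))%:C,
      is_endpoint (2 * cos tb) (2 * cos tc) (2 * cos (tb + tc))%:C
      /\ is_endpoint (2 * cos ta) (2 * cos td) (2 * cos (tb + tc))%:C &
      is_endpoint (2 * cos ta) (2 * cos tc) (2 * cos (ta + tc))%:C
      /\ is_endpoint (2 * cos tb) (2 * cos td) (2 * cos (ta + tc))%:C].
Proof.
rewrite eitheta_quat -quat1 => /quat_inj [cos1 _ sin0 _].
have cos_compl p : cos (ta + tb + tc + td - p) = cos p by rewrite cosB cos1 sin0; ring.
split; split; try exact: is_endpoint_cosD.
- rewrite -(cos_compl (ta + tb)) (_ : _ - _ = tc + td); [exact: is_endpoint_cosD | ring].
- rewrite -(cos_compl (tb + tc)) (_ : _ - _ = ta + td); [exact: is_endpoint_cosD | ring].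
- rewrite -(cos_compl (ta + tc)) (_ : _ - _ = tb + td); [exact: is_endpoint_cosD | ring].
Qed.

Lemma Spin2_rep_endpoints (a b c d : R) (rA rB rC rD : 'M[R[i]]_2) :
  [/\ \tr rA = a%:C, \tr rB = b%:C, \tr rC = c%:C & \tr rD = d%:C] ->
  rA *m rB *m rC *m rD = 1%:M -> Spin2_rep rA rB rC rD ->
  [/\ is_endpoint a b (\tr (rA *m rB)) /\ is_endpoint c d (\tr (rA *m rB)),
      is_endpoint b c (\tr (rB *m rC)) /\ is_endpoint a d (\tr (rB *m rC)) &
      is_endpoint a c (\tr (rC *m rA)) /\ is_endpoint b d (\tr (rC *m rA))].
Proof.
move=> [trA trB trC trD] prod1 [g [g_SU2 g_Spin2]].
have gU := SU2_unitmx g_SU2.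
have [ta eA] : Spin2 (g *m rA *m invmx g) by apply: g_Spin2; rewrite !inE eqxx.
have [tb eB] : Spin2 (g *m rB *m invmx g) by apply: g_Spin2; rewrite !inE eqxx !orbT.
have [tc eC] : Spin2 (g *m rC *m invmx g) by apply: g_Spin2; rewrite !inE eqxx !orbT.
have [td eD] : Spin2 (g *m rD *m invmx g) by apply: g_Spin2; rewrite !inE eqxx !orbT.
have tr_conj X : \tr X = \tr (g *m X *m invmx g) by rewrite mxtrace_conj.
have -> : a = 2 * cos ta by apply: complexI; rewrite -trA tr_conj eA mxtrace_eitheta.
have -> : b = 2 * cos tb by apply: complexI; rewrite -trB tr_conj eB mxtrace_eitheta.
have -> : c = 2 * cos tc by apply: complexI; rewrite -trC tr_conj eC mxtrace_eitheta.
have -> : d = 2 * cos td by apply: complexI; rewrite -trD tr_conj eD mxtrace_eitheta.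
rewrite (tr_conj (rA *m rB)) (tr_conj (rB *m rC)) (tr_conj (rC *m rA)).
rewrite -!mulmx_conj // eA eB eC !eithetaD !mxtrace_eitheta [tc + ta]addrC.
apply: endpoints_of_angles.
by rewrite -!eithetaD -eA -eB -eC -eD !mulmx_conj // prod1 mulmx1 mulmxV.
Qed.

Lemma endpoint_parallel (a0 a1 a2 a3 b0 b1 b2 b3 : R) :
  a0 ^+ 2 + a1 ^+ 2 + a2 ^+ 2 + a3 ^+ 2 = 1 -> b0 ^+ 2 + b1 ^+ 2 + b2 ^+ 2 + b3 ^+ 2 = 1 ->
  0 < a1 ^+ 2 + a2 ^+ 2 + a3 ^+ 2 ->
  is_endpoint (2 * a0) (2 * b0) (\tr (quat a0 a1 a2 a3 *m quat b0 b1 b2 b3)) ->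
  exists mu, [/\ b1 = mu * a1, b2 = mu * a2 & b3 = mu * a3].
Proof.
move=> a_unit b_unit na_gt0; rewrite quatM mxtrace_quat => endp.
apply: cauchy_schwarz3_eq => //.
apply: (@is_endpoint_sqr _ a0 b0).
- by rewrite -a_unit; ring.
- by rewrite -b_unit; ring.
- by rewrite !addr_ge0 ?sqr_ge0.
- by rewrite !addr_ge0 ?sqr_ge0.
by move: endp; congr (is_endpoint _ _ (_%:C)); ring.
Qed.

Lemma Spin2_rep_collinear (a0 a1 a2 a3 b0 muB c0 muC : R) (rD : 'M[R[i]]_2) :
  0 < a1 ^+ 2 + a2 ^+ 2 + a3 ^+ 2 ->
  a0 ^+ 2 + a1 ^+ 2 + a2 ^+ 2 + a3 ^+ 2 = 1 ->
  b0 ^+ 2 + muB ^+ 2 * (a1 ^+ 2 + a2 ^+ 2 + a3 ^+ 2) = 1 ->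
  c0 ^+ 2 + muC ^+ 2 * (a1 ^+ 2 + a2 ^+ 2 + a3 ^+ 2) = 1 ->
  let rA := quat a0 a1 a2 a3 in
  let rB := quat b0 (muB * a1) (muB * a2) (muB * a3) in
  let rC := quat c0 (muC * a1) (muC * a2) (muC * a3) in
  rA *m rB *m rC *m rD = 1%:M -> Spin2_rep rA rB rC rD.
Proof.
move=> na_gt0 a_unit b_unit c_unit rA rB rC prod1.
have [g [g_SU2 g_Spin2]] := Spin2_conj_axis na_gt0.
apply: (Spin2_rep_conj g_SU2 prod1); rewrite /rA /rB /rC; try exact: g_Spin2.
rewrite -[a1]mul1r -[a2]mul1r -[a3]mul1r; apply: g_Spin2.
by rewrite expr1n mul1r -a_unit; ring.
Qed.

Lemma endpoints_Spin2_rep (a b c : R) (rA rB rC rD : 'M[R[i]]_2) : -2 < a < 2 ->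
  SU2 rA -> SU2 rB -> SU2 rC -> \tr rA = a%:C -> \tr rB = b%:C -> \tr rC = c%:C ->
  rA *m rB *m rC *m rD = 1%:M ->
  is_endpoint a b (\tr (rA *m rB)) -> is_endpoint a c (\tr (rC *m rA)) ->
  Spin2_rep rA rB rC rD.
Proof.
move=> /andP[a_gt a_lt].
move=> /SU2_quat[a0 [a1 [a2 [a3 [-> a_unit]]]]] /SU2_quat[b0 [b1 [b2 [b3 [-> b_unit]]]]].
move=> /SU2_quat[c0 [c1 [c2 [c3 [-> c_unit]]]]].
rewrite !mxtrace_quat => /complexI ea /complexI eb /complexI ec; subst a b c.
move=> prod1 endp_ab; rewrite mxtrace_mulC => endp_ac.
have na_gt0 : 0 < a1 ^+ 2 + a2 ^+ 2 + a3 ^+ 2 by nra.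
have [muB [eb1 eb2 eb3]] := endpoint_parallel a_unit b_unit na_gt0 endp_ab.
have [muC [ec1 ec2 ec3]] := endpoint_parallel a_unit c_unit na_gt0 endp_ac.
subst b1 b2 b3 c1 c2 c3.
by apply: Spin2_rep_collinear prod1 => //; [rewrite -b_unit | rewrite -c_unit]; ring.
Qed.

End QuaternionModel.

Theorem proposition3p1 (R : realType) (a b c d : R)
  (ha : -2 <= a <= 2) (hb : -2 <= b <= 2) (hc : -2 <= c <= 2) (hd : -2 <= d <= 2)
  (ha2 : a != 2) (ha2' : a != -2) (hb2 : b != 2) (hb2' : b != -2)
  (hc2 : c != 2) (hc2' : c != -2) (hd2 : d != 2) (hd2' : d != -2)
  (rA rB rC rD : 'M[R[i]]_2) (hrho : in_H a b c d rA rB rC rD) :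
  let x := \tr (rA *m rB) in
  let y := \tr (rB *m rC) in
  let z := \tr (rC *m rA) in
  Spin2_rep rA rB rC rD <->
  [/\ is_endpoint a b x /\ is_endpoint c d x,
      is_endpoint b c y /\ is_endpoint a d y &
      is_endpoint a c z /\ is_endpoint b d z].
Proof.
move=> x y z; subst x y z.
case: hrho => [[sA sB sC _ prod1] traces].
split; first exact: Spin2_rep_endpoints.
case: traces => trA trB trC _ [[endp_ab _] _ [endp_ac _]].
apply: (endpoints_Spin2_rep _ sA sB sC trA trB trC prod1 endp_ab endp_ac).
by rewrite !lt_neqAle ha2 eq_sym ha2'; case/andP: ha => -> ->.
Qed.
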